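(* Let $\lambda_{\max}>1$ and let $F:[0,\lambda_{\max}]\to\mathbb{R}$ be continuously differentiable, with $F''$ existing and continuous on $(0,\lambda_{\max})$, $F''(1)<0$, and $F^{(3)},F^{(4)}$ existing and bounded on $[0,\lambda_{\max}]$. Suppose $F(x)<F'(1)(x-1)+F(1)$ for all $x\in[0,\lambda_{\max}]\setminus\{1\}$. Then there exists a concave quadratic function $G$ with $G(1)=F(1)$ and $G'(1)=F'(1)$ such that $F(x)\le G(x)\le F'(1)(x-1)+F(1)$ for all $x\in[0,\lambda_{\max}]$. *)

From Stdlib Require Import Reals.
From Coquelicot Require Import Coquelicot.
Open Scope R_scope.

Definition is_derive_on_closed (a b : R) (f f' : R -> R) : Prop :=
  forall x, a <= x <= b ->
    filterlim (fun h => (f (x + h) - f x) / h)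
      (within (fun h => h <> 0 /\ a <= x + h <= b) (locally 0))
      (locally (f' x)).

Definition continuous_on_closed (a b : R) (g : R -> R) : Prop :=
  forall x, a <= x <= b ->
    filterlim g (within (fun y => a <= y <= b) (locally x)) (locally (g x)).

(* Let T be the tangent line of F at 1 and c = -F''(1)/4.  Near 1 we have F'' < F''(1)/2 = -2c,
   so T - c (x-1)^2 - F is convex with a double zero at 1, hence nonnegative there.  Away from 1,
   T - F is continuous and positive on a compact set, hence bounded below by some m > 0.  As
   (x-1)^2 is bounded on [0, lmax], a small enough eps <= c makes G = T - eps (x-1)^2 lie above F
   everywhere, while G <= T is automatic. *)

From Stdlib Require Import Reals Lra.
From Coquelicot Require Import Coquelicot.
Open Scope R_scope.

Lemma ball_Rabs (x e y : R) : ball x e y <-> Rabs (y - x) < e.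
Proof. reflexivity. Qed.

Lemma derive_nonneg_le (g g' : R -> R) (a b : R) :
  a <= b ->
  (forall x, a <= x <= b -> is_derive g x (g' x)) ->
  (forall x, a <= x <= b -> 0 <= g' x) ->
  g a <= g b.
Proof.
  intros Hab Hd Hpos.
  destruct (MVT_gen g a b g') as [xi [Hxi Heq]];
    rewrite ?Rmin_left, ?Rmax_right in * by lra.
  - intros x Hx. apply Hd. lra.
  - intros x Hx. apply continuity_pt_filterlim.
    apply (ex_derive_continuous (K := R_AbsRing) (V := R_NormedModule)).
    exists (g' x). now apply Hd.
  - pose proof (Hpos xi Hxi). nra.
Qed.

Lemma derive_nonpos_ge (g g' : R -> R) (a b : R) :
  a <= b ->
  (forall x, a <= x <= b -> is_derive g x (g' x)) ->
  (forall x, a <= x <= b -> g' x <= 0) ->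
  g b <= g a.
Proof.
  intros Hab Hd Hneg.
  enough (- g a <= - g b) by lra.
  apply (derive_nonneg_le (fun x => - g x) (fun x => - g' x)); auto.
  - intros x Hx. now apply (is_derive_opp (K := R_AbsRing) (V := R_NormedModule)), Hd.
  - intros x Hx. specialize (Hneg x Hx). lra.
Qed.

Lemma convex_above_tangent (g g' g'' : R -> R) (a b x0 : R) :
  (forall x, a < x < b -> is_derive g x (g' x)) ->
  (forall x, a < x < b -> is_derive g' x (g'' x)) ->
  (forall x, a < x < b -> 0 <= g'' x) ->
  a < x0 < b ->
  forall x, a < x < b -> g x0 + g' x0 * (x - x0) <= g x.
Proof.
  intros Hg Hg' Hg'' Hx0 x Hx.
  set (h := fun t => g t - g' x0 * t).
  assert (Hh : forall t, a < t < b -> is_derive h t (g' t - g' x0)).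
  { intros t Ht. apply (is_derive_minus g (fun t => g' x0 * t)); [now apply Hg|].
    auto_derive; [easy | ring]. }
  enough (h x0 <= h x) by (unfold h in *; lra).
  destruct (Rle_or_lt x0 x).
  - apply (derive_nonneg_le h (fun t => g' t - g' x0)); auto.
    + intros t Ht. apply Hh. lra.
    + intros t Ht. enough (g' x0 <= g' t) by lra.
      apply (derive_nonneg_le g' g''); try lra; intros; [apply Hg' | apply Hg'']; lra.
  - apply (derive_nonpos_ge h (fun t => g' t - g' x0)); try lra.
    + intros t Ht. apply Hh. lra.
    + intros t Ht. enough (g' t <= g' x0) by lra.
      apply (derive_nonneg_le g' g''); try lra; intros; [apply Hg' | apply Hg'']; lra.
Qed.

Lemma below_tangent_parabola (f f' f'' : R -> R) (a b x0 c : R) :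
  (forall x, a < x < b -> is_derive f x (f' x)) ->
  (forall x, a < x < b -> is_derive f' x (f'' x)) ->
  (forall x, a < x < b -> f'' x <= - (2 * c)) ->
  a < x0 < b ->
  forall x, a < x < b -> f x <= f x0 + f' x0 * (x - x0) - c * (x - x0) ^ 2.
Proof.
  intros Hf Hf' Hf'' Hx0 x Hx.
  assert (Hquad : forall t, is_derive (fun t => c * (t - x0) ^ 2) t (2 * c * (t - x0)))
    by (intros t; auto_derive; [easy | ring]).
  enough (- f x0 - c * (x0 - x0) ^ 2 + (- f' x0 - 2 * c * (x0 - x0)) * (x - x0)
          <= - f x - c * (x - x0) ^ 2) by lra.
  apply (convex_above_tangent (fun t => - f t - c * (t - x0) ^ 2)
           (fun t => - f' t - 2 * c * (t - x0)) (fun t => - f'' t - 2 * c) a b);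
    auto; intros t Ht.
  - apply (is_derive_minus (fun t => - f t)); [|apply Hquad].
    now apply (is_derive_opp (K := R_AbsRing) (V := R_NormedModule)), Hf.
  - apply (is_derive_minus (fun t => - f' t) (fun t => 2 * c * (t - x0))).
    + now apply (is_derive_opp (K := R_AbsRing) (V := R_NormedModule)), Hf'.
    + auto_derive; [easy | ring].
  - specialize (Hf'' t Ht). lra.
Qed.

Lemma is_derive_on_closed_approx (a b : R) (f f' : R -> R) (x : R) :
  is_derive_on_closed a b f f' -> a <= x <= b ->
  forall eps, 0 < eps -> exists d, 0 < d /\
    forall h, h <> 0 -> a <= x + h <= b -> Rabs h < d ->
      Rabs ((f (x + h) - f x) / h - f' x) < eps.
Proof.
  intros Hf Hx eps Heps.
  destruct (proj1 (filterlim_locally _ _) (Hf x Hx) (mkposreal eps Heps)) as [d Hd].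
  exists d. split; [apply cond_pos|].
  intros h Hh0 Hh Hhd. apply Hd; [apply ball_Rabs; now rewrite Rminus_0_r | easy].
Qed.

Lemma is_derive_on_closed_interior (a b : R) (f f' : R -> R) (x : R) :
  is_derive_on_closed a b f f' -> a < x < b -> is_derive f x (f' x).
Proof.
  intros Hf Hx. apply is_derive_Reals. intros eps Heps.
  destruct (is_derive_on_closed_approx a b f f' x Hf ltac:(lra) eps Heps) as [d [Hd Hq]].
  assert (Hd' : 0 < Rmin d (Rmin (x - a) (b - x))) by (repeat apply Rmin_pos; lra).
  exists (mkposreal _ Hd'). simpl. intros h Hh0 Hh.
  pose proof (Rmin_l d (Rmin (x - a) (b - x))). pose proof (Rmin_r d (Rmin (x - a) (b - x))).
  pose proof (Rmin_l (x - a) (b - x)). pose proof (Rmin_r (x - a) (b - x)).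
  apply Rabs_def2 in Hh as Hh'. apply Hq; lra.
Qed.

Lemma is_derive_on_closed_continuous (a b : R) (f f' : R -> R) :
  is_derive_on_closed a b f f' -> continuous_on_closed a b f.
Proof.
  intros Hf x Hx. apply filterlim_locally. intros eps.
  destruct (is_derive_on_closed_approx a b f f' x Hf Hx 1 Rlt_0_1) as [d [Hd Hq]].
  set (K := Rabs (f' x) + 1).
  assert (HK : 0 < K) by (pose proof (Rabs_pos (f' x)); unfold K; lra).
  assert (Hd' : 0 < Rmin d (eps / K))
    by (apply Rmin_pos; [lra | apply Rdiv_lt_0_compat; [apply cond_pos | lra]]).
  exists (mkposreal _ Hd'). intros y Hy Hyab. change R in y. apply ball_Rabs.
  assert (Hyx_small : Rabs (y - x) < Rmin d (eps / K)) by exact Hy.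
  destruct (Req_dec y x) as [->|Hyx]; [rewrite Rminus_eq_0, Rabs_R0; apply cond_pos|].
  assert (Hyx_d : Rabs (y - x) < d)
    by (eapply Rlt_le_trans; [exact Hyx_small | apply Rmin_l]).
  assert (Hyx_K : Rabs (y - x) < eps / K)
    by (eapply Rlt_le_trans; [exact Hyx_small | apply Rmin_r]).
  specialize (Hq (y - x) ltac:(lra)). replace (x + (y - x)) with y in Hq by ring.
  specialize (Hq Hyab ltac:(lra)).
  assert (Hbound : Rabs ((f y - f x) / (y - x)) <= K).
  { pose proof (Rabs_triang_inv ((f y - f x) / (y - x)) (f' x)). unfold K. lra. }
  replace (f y - f x) with ((f y - f x) / (y - x) * (y - x)) by (field; lra).
  rewrite Rabs_mult.
  apply Rle_lt_trans with (K * Rabs (y - x)).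
  - apply Rmult_le_compat_r; [apply Rabs_pos | exact Hbound].
  - apply Rlt_le_trans with (K * (eps / K)); [apply Rmult_lt_compat_l; lra|].
    right. field. lra.
Qed.

(* Extending f constantly outside [a, b] turns continuity relative to [a, b] into continuity at
   every point, which is what Stdlib's extreme value theorem [continuity_ab_min] asks for. *)
Definition clamp (a b y : R) : R := Rmax a (Rmin b y).

Lemma clamp_id (a b x : R) : a <= x <= b -> clamp a b x = x.
Proof. intros. unfold clamp, Rmax, Rmin. repeat destruct Rle_dec; lra. Qed.

Lemma clamp_in (a b y : R) : a <= b -> a <= clamp a b y <= b.
Proof. intros. unfold clamp, Rmax, Rmin. repeat destruct Rle_dec; lra. Qed.

Lemma clamp_lipschitz (a b x y : R) :
  a <= b -> Rabs (clamp a b y - clamp a b x) <= Rabs (y - x).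
Proof.
  intros. unfold clamp, Rmax, Rmin, Rabs.
  repeat destruct Rle_dec; repeat destruct Rcase_abs; lra.
Qed.

Lemma continuous_on_closed_clamp (a b : R) (f : R -> R) :
  a <= b -> continuous_on_closed a b f ->
  forall x, continuity_pt (fun y => f (clamp a b y)) x.
Proof.
  intros Hab Hf x. apply continuity_pt_filterlim.
  apply (filterlim_comp _ _ _ (clamp a b) f _
           (within (fun y => a <= y <= b) (locally (clamp a b x)))).
  - intros P [e He]. exists e. intros y Hy.
    apply He; [|now apply clamp_in].
    apply Rle_lt_trans with (2 := Hy), clamp_lipschitz, Hab.
  - now apply Hf, clamp_in.
Qed.

Lemma continuous_pos_lower_bound (g : R -> R) (a b : R) :
  (forall x, a <= x <= b -> continuity_pt g x) ->
  (forall x, a <= x <= b -> 0 < g x) ->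
  exists m, 0 < m /\ forall x, a <= x <= b -> m <= g x.
Proof.
  intros Hg Hpos. destruct (Rle_lt_dec a b) as [Hab|Hba].
  - destruct (continuity_ab_min g a b Hab Hg) as [xm [Hxm Hin]].
    exists (g xm). split; [now apply Hpos | exact Hxm].
  - exists 1. split; [lra|]. intros x Hx. lra.
Qed.

Lemma quadratic_minorant (h : R -> R) (a b x0 c r : R) :
  a <= x0 <= b -> 0 < c -> 0 < r ->
  (forall x, a <= x <= b -> continuity_pt h x) ->
  (forall x, a <= x <= b -> x <> x0 -> 0 < h x) ->
  (forall x, a <= x <= b -> Rabs (x - x0) < r -> c * (x - x0) ^ 2 <= h x) ->
  exists eps, 0 < eps /\ forall x, a <= x <= b -> eps * (x - x0) ^ 2 <= h x.
Proof.
  intros Hx0 Hc Hr Hcont Hpos Hnear.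
  destruct (continuous_pos_lower_bound h a (x0 - r)) as [m1 [Hm1 Hle1]];
    [intros; apply Hcont; lra | intros; apply Hpos; lra |].
  destruct (continuous_pos_lower_bound h (x0 + r) b) as [m2 [Hm2 Hle2]];
    [intros; apply Hcont; lra | intros; apply Hpos; lra |].
  (* D bounds (x - x0)^2 on [a, b]; the + 1 keeps it nonzero when a = b. *)
  set (D := (b - a) ^ 2 + 1).
  set (m := Rmin m1 m2).
  assert (HD : 0 < D) by (unfold D; nra).
  assert (Hm : 0 < m) by (now apply Rmin_pos).
  set (eps := Rmin c (m / D)).
  assert (Heps : 0 < eps) by (apply Rmin_pos; [lra | now apply Rdiv_lt_0_compat]).
  exists eps. split; [exact Heps|]. intros x Hx.
  assert (Heps_c : eps <= c) by apply Rmin_l.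
  assert (Heps_m : eps <= m / D) by apply Rmin_r.
  assert (Hsq : 0 <= (x - x0) ^ 2) by apply pow2_ge_0.
  destruct (Rlt_or_le (Rabs (x - x0)) r) as [Hxr|Hxr].
  - apply Rle_trans with (c * (x - x0) ^ 2); [nra | now apply Hnear].
  - assert (Hhx : m <= h x).
    { pose proof (Rmin_l m1 m2). pose proof (Rmin_r m1 m2).
      unfold Rabs in Hxr; destruct Rcase_abs.
      - pose proof (Hle1 x ltac:(lra)). unfold m. lra.
      - pose proof (Hle2 x ltac:(lra)). unfold m. lra. }
    assert (HxD : (x - x0) ^ 2 <= D).
    { unfold D.
      assert (0 <= (b - a - (x - x0)) * (b - a + (x - x0))) by (apply Rmult_le_pos; lra).
      nra. }
    assert (Hmd : m / D * D = m) by (field; lra).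
    apply Rle_trans with (m / D * D); [|lra].
    apply Rmult_le_compat; lra.
Qed.

Theorem lemmaC2 (lmax : R) (F F1 F2 F3 F4 : R -> R) (M : R) :
  1 < lmax ->
  (* F is continuously differentiable on [0, lmax], with derivative F1 *)
  is_derive_on_closed 0 lmax F F1 ->
  continuous_on_closed 0 lmax F1 ->
  (* F'' = F2 exists and is continuous on (0, lmax), with F''(1) < 0 *)
  (forall x, 0 < x < lmax -> is_derive F1 x (F2 x)) ->
  (forall x, 0 < x < lmax -> continuous F2 x) ->
  F2 1 < 0 ->
  (* F''' = F3 and F'''' = F4 exist and are bounded (by M) *)
  (forall x, 0 < x < lmax -> is_derive F2 x (F3 x)) ->
  (forall x, 0 < x < lmax -> is_derive F3 x (F4 x)) ->
  (forall x, 0 < x < lmax -> Rabs (F3 x) <= M /\ Rabs (F4 x) <= M) ->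
  (* strict tangent-line inequality away from 1 *)
  (forall x, 0 <= x <= lmax -> x <> 1 -> F x < F1 1 * (x - 1) + F 1) ->
  exists a b c : R,
    a < 0 /\
    a * 1 ^ 2 + b * 1 + c = F 1 /\
    2 * a * 1 + b = F1 1 /\
    (forall x, 0 <= x <= lmax ->
       F x <= a * x ^ 2 + b * x + c /\
       a * x ^ 2 + b * x + c <= F1 1 * (x - 1) + F 1).
Proof.
  intros Hlmax HF _ HF2 HF2cont HF21 _ _ _ Htangent.
  set (c := - F2 1 / 4).
  assert (Hnbhd : locally 1 (fun x => (0 < x /\ x < lmax) /\ F2 x < F2 1 / 2)).
  { apply filter_and.
    - apply (open_and _ _ (open_gt 0) (open_lt lmax)). lra.
    - apply (HF2cont 1 ltac:(lra) (fun y => y < F2 1 / 2)), open_lt. lra. }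
  destruct Hnbhd as [r Hr].
  assert (Hnear : forall x, 1 - r < x < 1 + r -> (0 < x < lmax) /\ F2 x <= - (2 * c)).
  { intros x Hx. destruct (Hr x) as [Hin HF2x]; [apply ball_Rabs, Rabs_def1; lra|].
    split; [exact Hin | unfold c; lra]. }
  assert (Hparabola : forall x, 1 - r < x < 1 + r ->
                        F x <= F 1 + F1 1 * (x - 1) - c * (x - 1) ^ 2).
  { apply (below_tangent_parabola F F1 F2 (1 - r) (1 + r)).
    - intros t Ht. apply (is_derive_on_closed_interior 0 lmax F F1 t HF), Hnear, Ht.
    - intros t Ht. apply HF2, Hnear, Ht.
    - intros t Ht. apply Hnear, Ht.
    - pose proof (cond_pos r). lra. }
  set (h := fun x => F1 1 * (x - 1) + F 1 - F (clamp 0 lmax x)).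
  destruct (quadratic_minorant h 0 lmax 1 c r) as [eps [Heps Hgap]].
  - lra.
  - unfold c. lra.
  - apply cond_pos.
  - intros x Hx. apply continuity_pt_minus; [reg|].
    apply continuous_on_closed_clamp; [lra|].
    exact (is_derive_on_closed_continuous 0 lmax F F1 HF).
  - intros x Hx Hx1. unfold h. rewrite clamp_id by lra. specialize (Htangent x Hx Hx1). lra.
  - intros x Hx Hxr. unfold h. rewrite clamp_id by lra.
    apply Rabs_def2 in Hxr. specialize (Hparabola x ltac:(lra)). lra.
  - exists (- eps), (F1 1 + 2 * eps), (F 1 - F1 1 - eps).
    split; [lra|]. split; [ring|]. split; [ring|].
    intros x Hx. specialize (Hgap x Hx). unfold h in Hgap. rewrite clamp_id in Hgap by lra.
    pose proof (pow2_ge_0 (x - 1)). split; nra.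
Qed.
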